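(* Consider the discretized protocol with respect to $G$ with parameter $\epsilon>0$ on an information structure, and suppose turn $t+1$ is Alice's. Fix a realized rectangle $S_t\times T_t$ with $\mathbb P(\sigma\in S_t,\tau\in T_t)>0$, and let ''hi'' be the event that Alice says ''high'' at turn $t+1$. Let $\alpha:=\mathbb E[D_G(\mu_{\sigma T_t}\parallel\mu_{S_tT_t})\mathbf 1_{\mathrm{hi}}\mid S_t,T_t]$. Then $\mathbb E[D_G(\mu_{S_{t+1}T_{t+1}}\parallel\mu_{S_tT_t})\mathbf 1_{\mathrm{hi}}\mid S_t,T_t]\ge\frac{\alpha\epsilon}{8M+2\epsilon}$. The analogous statement holds with ''low'' in place of ''high'', and likewise when turn $t+1$ is Bob's (with $\mu_{S_t\tau}$ in place of $\mu_{\sigma T_t}$).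
   Context: $G:[0,1]\to\mathbb R$ strictly convex, differentiable on $(0,1)$, $M:=\sup G-\inf G<\infty$; $D_G(y\parallel x)=G(y)-G(x)-(y-x)G'(x)$. An information structure is a tuple $(\Omega,\mathbb P,\mathcal S,\mathcal T,Y)$: a probability space, random variables $\sigma:\Omega\to\mathcal S$ (Alice's signal), $\tau:\Omega\to\mathcal T$ (Bob's signal), $Y:\Omega\to[0,1]$. For measurable $S,T$: $\mu_{\sigma T}=\mathbb E[Y\mid\sigma,\tau\in T]$, $\mu_{S\tau}=\mathbb E[Y\mid\sigma\in S,\tau]$, $\mu_{ST}=\mathbb E[Y\mid\sigma\in S,\tau\in T]$; $\mathbb E[\cdot\mid S,T]$ conditions on $\{\sigma\in S,\tau\in T\}$. In a communication protocol, after $t$ messages the set of signal pairs consistent with the transcript is a rectangle $S_t\times T_t$ ($S_0=\mathcal S$, $T_0=\mathcal T$). Discretized protocol w.r.t. $G$ with parameter $\epsilon$: Alice speaks at odd times, Bob at even times. On Alice's turn $t$, she sends ''medium'' if $D_G(\mu_{\sigma T_{t-1}}\parallel\mu_{S_{t-1}T_{t-1}})<\epsilon/2$; otherwise ''high'' if $\mu_{\sigma T_{t-1}}>\mu_{S_{t-1}T_{t-1}}$ and ''low'' if $\mu_{\sigma T_{t-1}}<\mu_{S_{t-1}T_{t-1}}$. Bob acts analogously with $\mu_{S_{t-1}\tau}$. *)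

From HB Require Import structures.
From mathcomp Require Import all_boot all_order all_algebra.
From mathcomp Require Import all_classical all_reals all_analysis.
Set Implicit Arguments.
Unset Strict Implicit.
Unset Printing Implicit Defensive.
Import Order.TTheory GRing.Theory Num.Theory.
Import numFieldNormedType.Exports.
Local Open Scope classical_set_scope.
Local Open Scope ring_scope.

Section Defs.
Context {R : realType}.

Definition strictly_convex01 (G : R -> R) : Prop :=
  forall x y t : R, 0 <= x <= 1 -> 0 <= y <= 1 -> x != y -> 0 < t < 1 ->
    G (t * x + (1 - t) * y) < t * G x + (1 - t) * G y.

Definition differentiable01 (G : R -> R) : Prop :=
  forall x : R, 0 < x < 1 -> derivable G x 1.

(* sup G - inf G < oo on [0,1], i.e. G bounded on [0,1] *)
Definition bounded01 (G : R -> R) : Prop :=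
  exists C : R, forall x : R, 0 <= x <= 1 -> `|G x| <= C.

Definition Mrange (G : R -> R) : R :=
  sup [set G x | x in [set x : R | 0 <= x <= 1]]
  - inf [set G x | x in [set x : R | 0 <= x <= 1]].

Definition DG (G : R -> R) (y x : R) : R := G y - G x - (y - x) * derive1 G x.

Definition condE_on d (Omega : measurableType d) (P : probability Omega R)
  (E : set Omega) (X : Omega -> R) : R :=
  fine (\int[P]_(w in E) (X w)%:E)%E / fine (P E).

(* f is a ([0,1]-valued) version of E[Y | own, other \in B], i.e.
   f o own = E[Y | own, other \in B] on the event {other \in B}. *)
Definition cond_version d d1 d2 (Omega : measurableType d)
  (P : probability Omega R) (S1 : measurableType d1) (S2 : measurableType d2)
  (own : Omega -> S1) (other : Omega -> S2) (B : set S2) (Y : Omega -> R)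
  (f : S1 -> R) : Prop :=
  measurable_fun setT f /\ (forall s, 0 <= f s <= 1) /\
  forall A : set S1, measurable A ->
    (\int[P]_(w in own @^-1` A `&` other @^-1` B) (Y w)%:E =
     \int[P]_(w in own @^-1` A `&` other @^-1` B) (f (own w))%:E)%E.

(* The signals in A whose holder sends the message "high" (up = true) or
   "low" (up = false), given their posterior f and the current mean mu0. *)
Definition msg_set (S1 : Type) (G : R -> R) (eps : R) (up : bool)
  (A : set S1) (mu0 : R) (f : S1 -> R) : set S1 :=
  [set s | A s /\ eps / 2 <= DG G (f s) mu0 /\
           (if up then mu0 < f s else f s < mu0)].

End Defs.

From HB Require Import structures.
From mathcomp Require Import all_boot all_order all_algebra.
From mathcomp Require Import all_classical all_reals all_analysis.
From mathcomp Require Import ring lra measurable_realfun.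
Set Implicit Arguments.
Unset Strict Implicit.
Unset Printing Implicit Defensive.
Import Order.TTheory GRing.Theory Num.Theory.
Import numFieldNormedType.Exports.
Local Open Scope classical_set_scope.
Local Open Scope ring_scope.

(* Write x for the mean of Y on the current rectangle E, h for the speaker's
   posterior and mu for the mean of Y on the event hi, which is also the mean of
   h on hi.  All posteriors in hi lie on the same side of x at divergence at
   least eps/2, and some of them lie between x and mu; since D_G(. || x) is
   convex and vanishes at x, D_G(mu || x) >= eps/2.  On the other hand
   D_G(. || x) is G plus an affine function and G varies by at most M on [0,1],
   so the average of D_G(h || x) over hi is at most D_G(mu || x) + M.  Hence
   alpha <= P(hi | E) (D + M) while the gain is P(hi | E) D, with
   D = D_G(mu || x), and (D + M) eps <= D (8 M + 2 eps) as soon as D >= eps/2. *)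

Section StrictlyConvex01.
Context {R : realType} (G : R -> R).
Hypotheses (cG : strictly_convex01 G) (dG : differentiable01 G).

Lemma convex01 x y t : 0 <= x <= 1 -> 0 <= y <= 1 -> 0 <= t <= 1 ->
  G (t * x + (1 - t) * y) <= t * G x + (1 - t) * G y.
Proof.
move=> x01 y01 /andP[t0 t1].
have [->|xy] := eqVneq x y; first by rewrite -!mulrDl subrKC !mul1r.
have [->|tn0] := eqVneq t 0; first by rewrite !mul0r !subr0 !mul1r !add0r.
have [->|tn1] := eqVneq t 1; first by rewrite !subrr !mul0r !mul1r !addr0.
by apply/ltW/cG; rewrite // !lt_neqAle eq_sym tn0 tn1 t0 t1.
Qed.

Lemma convex01_tangent x z : 0 < x < 1 -> 0 <= z <= 1 ->
  G x + (z - x) * derive1 G x <= G z.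
Proof.
move=> x01 z01; have x01' : 0 <= x <= 1 by case/andP: x01 => /ltW -> /ltW ->.
have dGx : differentiable G x by apply/derivable1_diffP/dG.
have -> : (z - x) * derive1 G x = 'D_(z - x) G x.
  by rewrite deriveE // derive1E' // -[in RHS](mulr1 (z - x)) linearZ.
(* By convexity each difference quotient (G (x + h (z - x)) - G x) / h with
   0 < h <= 1 is at most G z - G x. *)
suff : 'D_(z - x) G x <= G z - G x by lra.
have Dr := cvg_dnbhs_at_right (diff_derivable (v := z - x) dGx).
rewrite /derive -(cvg_lim _ Dr) //.
apply: limr_le; first by apply/cvg_ex; eexists; exact: Dr.
near=> h.
have h0 : 0 < h by near: h; exact: nbhs_right_gt.
have h01 : 0 <= h <= 1 by rewrite ltW //= ltW //; near: h; exact: nbhs_right_lt.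
rewrite /= /shift /= ler_pdivrMl //.
have -> : h * (z - x) + x = h * z + (1 - h) * x by ring.
have := convex01 z01 x01' h01; lra.
Unshelve. all: by end_near.
Qed.

Lemma DG_ge0 x y : 0 < x < 1 -> 0 <= y <= 1 -> 0 <= DG G y x.
Proof. by move=> x01 y01; have := convex01_tangent x01 y01; rewrite /DG; lra. Qed.

Lemma DG_conv x y t : 0 <= x <= 1 -> 0 <= y <= 1 -> 0 <= t <= 1 ->
  DG G (t * y + (1 - t) * x) x <= t * DG G y x.
Proof. by move=> x01 y01 t01; have := convex01 y01 x01 t01; rewrite /DG; lra. Qed.

Lemma DG_le_between x y z : 0 < x < 1 -> 0 <= y <= 1 ->
  (x <= z <= y) || (y <= z <= x) -> DG G z x <= DG G y x.
Proof.
move=> x01 y01 zxy; have x01' : 0 <= x <= 1 by case/andP: x01 => /ltW -> /ltW ->.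
have [yx|yx] := eqVneq y x.
  suff -> : z = x by rewrite /DG !subrr mul0r subr0 DG_ge0.
  by apply/le_anti; case/orP: zxy; rewrite yx => /andP[-> ->].
set t := (z - x) / (y - x).
have t01 : 0 <= t <= 1.
  case/orP: zxy => /andP[lez gez].
    have yx0 : 0 < y - x by rewrite subr_gt0 lt_neqAle eq_sym yx (le_trans lez gez).
    rewrite /t divr_ge0 ?subr_ge0 ?ler_pdivrMr ?mul1r ?lerB //.
    exact: le_trans lez gez.
  have xy0 : 0 < x - y by rewrite subr_gt0 lt_neqAle yx (le_trans lez gez).
  rewrite /t -opprB -[y - x]opprB invrN mulrNN.
  rewrite divr_ge0 ?subr_ge0 ?ler_pdivrMr ?mul1r ?lerB //.
  exact: le_trans lez gez.
have -> : z = t * y + (1 - t) * x by rewrite /t; field; rewrite subr_eq0.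
apply: le_trans (DG_conv x01' y01 t01) _.
by rewrite ler_piMl ?DG_ge0 //; case/andP: t01.
Qed.

Lemma measurable_fun_G01 : measurable_fun `[0 : R, 1] G.
Proof.
apply: (@measurable_fun_itv_cc _ _ _ false true).
apply: open_continuous_measurable_fun; first exact: interval_open.
move=> x; rewrite inE => x01.
by apply/differentiable_continuous/derivable1_diffP/dG.
Qed.

Lemma measurable_DG (d : measure_display) (T : measurableType d) (f : T -> R) c :
  measurable_fun setT f -> (forall s, 0 <= f s <= 1) ->
  measurable_fun setT (fun s => DG G (f s) c).
Proof.
move=> mf f01; have mGf : measurable_fun setT (G \o f).
  apply: (measurable_comp (F := `[0 : R, 1])) => //; last exact: measurable_fun_G01.
  by move=> _ [s _ <-]; rewrite /= in_itv /= f01.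
apply: measurable_funB; first by apply: measurable_funB => //; exact: measurable_cst.
apply: measurable_funM; last exact: measurable_cst.
by apply: measurable_funB => //; exact: measurable_cst.
Qed.

End StrictlyConvex01.

Section Bounded01.
Context {R : realType} (G : R -> R).
Hypothesis bG : bounded01 G.

Lemma subr_le_Mrange a b : 0 <= a <= 1 -> 0 <= b <= 1 -> G a - G b <= Mrange G.
Proof.
move: bG => [C GC] a01 b01; set S := [set G x | x in [set x : R | 0 <= x <= 1]].
have boundS : forall y, S y -> `|y| <= C by move=> _ [x x01 <-]; exact: GC.
have supS : has_sup S.
  split; first by exists (G a), a.
  by exists C => y /boundS; rewrite ler_norml => /andP[].
have infS : has_inf S.
  split; first by exists (G a), a.
  by exists (- C) => y /boundS; rewrite ler_norml => /andP[].
have Ga : G a <= sup S by apply: sup_upper_bound => //; exists a.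
have Gb : inf S <= G b by apply: ge_inf; [case: infS | exists b].
rewrite /Mrange -/S; lra.
Qed.

Lemma Mrange_ge0 : 0 <= Mrange G.
Proof. by have := @subr_le_Mrange 0 0; rewrite subrr lexx ler01; apply. Qed.

Lemma DG_bounded01 c : exists C, forall y, 0 <= y <= 1 -> `|DG G y c| <= C.
Proof.
move: bG => [C GC]; exists (C + `|G c| + (1 + `|c|) * `|derive1 G c|) => y y01.
rewrite /DG; apply: le_trans (ler_normB _ _) _; apply: lerD.
  by apply: le_trans (ler_normB _ _) _; rewrite lerD2r GC.
rewrite normrM ler_wpM2r //; apply: le_trans (ler_normB _ _) _.
by case/andP: y01 => y0 y1; rewrite lerD2r ger0_norm.
Qed.

End Bounded01.

Section ConditionalMean.
Context {R : realType} {d : measure_display} {Omega : measurableType d}.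
Variable P : probability Omega R.
Implicit Types (D E H : set Omega) (f Y : Omega -> R).

Lemma condE_onE D f : condE_on P D f = (\int[P]_(w in D) f w) / fine (P D).
Proof. by []. Qed.

Lemma fine_prob_gt0 D : measurable D -> P D != 0 -> 0 < fine (P D).
Proof.
move=> mD PD0; rewrite lt_neqAle eq_sym fine_eq0 ?fin_num_measure // PD0 /=.
by rewrite fine_ge0 ?measure_ge0.
Qed.

Lemma bounded_integrable D f C : measurable D -> measurable_fun setT f ->
  (forall w, `|f w| <= C) -> P.-integrable D (EFin \o f).
Proof.
move=> mD mf fC; apply: measurable_bounded_integrable => //.
- exact: le_lt_trans (probability_le1 P mD) (ltry 1).
- exact: measurable_funS mf.
- exists C; split; first by rewrite num_real.
  by move=> M CM w _; exact: le_trans (fC w) (ltW CM).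
Qed.

Lemma unit_integrable D f : measurable D -> measurable_fun setT f ->
  (forall w, 0 <= f w <= 1) -> P.-integrable D (EFin \o f).
Proof.
move=> mD mf f01; apply: (bounded_integrable (C := 1)) => // w.
by case/andP: (f01 w) => f0 f1; rewrite ger0_norm.
Qed.

Lemma measurable_affine f a b : measurable_fun setT f ->
  measurable_fun setT (fun w => a + b * f w).
Proof.
move=> mf; apply: measurable_funD; first exact: measurable_cst.
by apply: measurable_funM => //; exact: measurable_cst.
Qed.

Lemma affine_integrable D f a b : measurable D -> measurable_fun setT f ->
  (forall w, 0 <= f w <= 1) -> P.-integrable D (EFin \o (fun w => a + b * f w)).
Proof.
move=> mD mf f01; apply: (@bounded_integrable _ _ (`|a| + `|b|)) => //.
  exact: measurable_affine.
move=> w; have /andP[f0 f1] := f01 w.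
by apply: le_trans (ler_normD _ _) _; rewrite lerD2l normrM ler_piMr // ger0_norm.
Qed.

Lemma Rintegral_mul_indic E H f : H `<=` E ->
  \int[P]_(w in E) (f w * \1_H w) = \int[P]_(w in H) f w.
Proof.
move=> HE; rewrite -[in RHS](setIidr HE) Rintegral_mkcondr.
apply: eq_Rintegral => w _; rewrite patchE indicE.
by case: (w \in H); rewrite ?mulr1 ?mulr0.
Qed.

Lemma Rintegral_affine H f a b : measurable H -> P H != 0 -> measurable_fun setT f ->
  (forall w, 0 <= f w <= 1) ->
  \int[P]_(w in H) (a + b * f w) = (a + b * condE_on P H f) * fine (P H).
Proof.
move=> mH PH0 mf f01; have pH0 : fine (P H) != 0 by rewrite gt_eqF // fine_prob_gt0.
rewrite RintegralD //; first last.
- by have := affine_integrable 0 b mH mf f01; under eq_fun do rewrite add0r.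
- by have := affine_integrable a 0 mH mf f01; under eq_fun do rewrite mul0r addr0.
rewrite Rintegral_cst // RintegralZl ?unit_integrable //.
by rewrite condE_onE mulrDl -mulrA divfK.
Qed.

Lemma Rintegral_gt0 H f : measurable H -> P H != 0 -> P.-integrable H (EFin \o f) ->
  (forall w, H w -> 0 < f w) -> 0 < \int[P]_(w in H) f w.
Proof.
move=> mH PH0 intf fpos.
rewrite lt_neqAle Rintegral_ge0 ?andbT; last by move=> w /fpos/ltW.
apply: contra PH0 => /eqP If0.
have mf : measurable_fun H (EFin \o f) := measurable_int P intf.
have : (\int[P]_(w in H) `|(EFin \o f) w| = 0)%E.
  rewrite -[0%E]/(0%:E) If0 fineK ?(integrable_fin_num mH intf) //.
  apply: eq_integral => w; rewrite inE => Hw.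
  by rewrite /comp abse_EFin gtr0_norm ?fpos.
move/(ae_eq_integral_abs P mH mf) => [N [mN PN0 HN]].
rewrite eq_le measure_ge0 andbT -PN0 le_measure ?inE //.
by move=> w Hw; apply: HN => /= /(_ Hw) /eqP; rewrite eqe gt_eqF ?fpos.
Qed.

Lemma condE_on_affine D f a b : measurable D -> P D != 0 -> measurable_fun setT f ->
  (forall w, 0 <= f w <= 1) ->
  condE_on P D (fun w => a + b * f w) = a + b * condE_on P D f.
Proof.
move=> mD PD0 mf f01; rewrite condE_onE Rintegral_affine // mulfK //.
by rewrite gt_eqF // fine_prob_gt0.
Qed.

Lemma Rintegral01 D f : measurable D -> measurable_fun setT f ->
  (forall w, 0 <= f w <= 1) -> 0 <= \int[P]_(w in D) f w <= fine (P D).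
Proof.
move=> mD mf f01; apply/andP; split.
  by apply: Rintegral_ge0 => w _; case/andP: (f01 w).
rewrite -[fine _]mul1r -Rintegral_cst //; apply: le_Rintegral => //.
- exact: unit_integrable.
- by apply: unit_integrable => // _; rewrite ler01 lexx.
- by move=> w _; case/andP: (f01 w).
Qed.

Lemma condE_on01 D f : measurable D -> measurable_fun setT f ->
  (forall w, 0 <= f w <= 1) -> 0 <= condE_on P D f <= 1.
Proof.
move=> mD mf f01; have /andP[I0 I1] := Rintegral01 mD mf f01.
rewrite condE_onE; have [->|PD0] := eqVneq (P D) 0.
  by rewrite /= invr0 mulr0 lexx ler01.
have pD := fine_prob_gt0 mD PD0.
by rewrite divr_ge0 ?ler_pdivrMr ?mul1r // ltW.
Qed.

Lemma Rintegral_le_subset E H f : measurable E -> measurable H -> H `<=` E ->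
  measurable_fun setT f -> (forall w, 0 <= f w <= 1) ->
  \int[P]_(w in H) f w <= \int[P]_(w in E) f w.
Proof.
move=> mE mH HE mf f01; rewrite -(Rintegral_mul_indic _ HE).
apply: le_Rintegral => //; last 2 first.
- exact: unit_integrable.
- move=> w _; have /andP[f0 f1] := f01 w.
  by rewrite indicE; case: (w \in H); rewrite ?mulr1 ?mulr0.
apply: unit_integrable => //.
  by apply: measurable_funM => //; exact: measurable_indic.
move=> w; have /andP[f0 f1] := f01 w.
by rewrite indicE; case: (w \in H); rewrite ?mulr1 ?mulr0 ?f0 ?f1 ?lexx ?ler01.
Qed.

Lemma condE_on_subset_eq0 E H Y : measurable E -> measurable H -> H `<=` E ->
  measurable_fun setT Y -> (forall w, 0 <= Y w <= 1) ->
  condE_on P E Y = 0 -> condE_on P H Y = 0.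
Proof.
move=> mE mH HE mY Y01 /eqP; rewrite condE_onE mulf_eq0 invr_eq0 => IEp.
have /andP[IE0 IE1] := Rintegral01 mE mY Y01.
have /andP[IH0 _] := Rintegral01 mH mY Y01.
have IE : \int[P]_(w in E) Y w <= 0 by case/orP: IEp => /eqP IEp; rewrite ?IEp // -IEp.
rewrite condE_onE; suff -> : \int[P]_(w in H) Y w = 0 by rewrite mul0r.
by apply/le_anti; rewrite IH0 (le_trans (Rintegral_le_subset mE mH HE mY Y01)).
Qed.

Lemma condE_on_subset_eq1 E H Y : measurable E -> measurable H -> H `<=` E ->
  P H != 0 -> measurable_fun setT Y -> (forall w, 0 <= Y w <= 1) ->
  condE_on P E Y = 1 -> condE_on P H Y = 1.
Proof.
move=> mE mH HE PH0 mY Y01 EY1.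
have PE0 : P E != 0.
  apply/eqP => PE0; move/eqP: EY1.
  by rewrite condE_onE PE0 /= invr0 mulr0 eq_sym oner_eq0.
have Y01' w : 0 <= 1 + -1 * Y w <= 1.
  by case/andP: (Y01 w) => Y0 Y1; rewrite mulN1r subr_ge0 gerBl Y0 Y1.
have := condE_on_subset_eq0 mE mH HE (measurable_affine 1 (-1) mY) Y01'.
rewrite !condE_on_affine // EY1 mulN1r subrr => /(_ erefl) /eqP.
by rewrite mulN1r subr_eq0 => /eqP <-.
Qed.

Lemma exists_le_condE_on H f : measurable H -> P H != 0 -> measurable_fun setT f ->
  (forall w, 0 <= f w <= 1) -> exists2 w, H w & f w <= condE_on P H f.
Proof.
move=> mH PH0 mf f01; apply: contrapT => nw.
have gt0 w : H w -> 0 < - condE_on P H f + 1 * f w.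
  move=> Hw; rewrite mul1r addrC subr_gt0 ltNge; apply/negP => fw.
  exact: nw (ex_intro2 _ _ w Hw fw).
have := Rintegral_gt0 mH PH0 (affine_integrable _ _ mH mf f01) gt0.
by rewrite Rintegral_affine // mul1r addNr mul0r ltxx.
Qed.

Lemma exists_ge_condE_on H f : measurable H -> P H != 0 -> measurable_fun setT f ->
  (forall w, 0 <= f w <= 1) -> exists2 w, H w & condE_on P H f <= f w.
Proof.
move=> mH PH0 mf f01; apply: contrapT => nw.
have gt0 w : H w -> 0 < condE_on P H f + -1 * f w.
  move=> Hw; rewrite mulN1r subr_gt0 ltNge; apply/negP => fw.
  exact: nw (ex_intro2 _ _ w Hw fw).
have := Rintegral_gt0 mH PH0 (affine_integrable _ _ mH mf f01) gt0.
by rewrite Rintegral_affine // mulN1r subrr mul0r ltxx.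
Qed.

End ConditionalMean.

Section DivergenceGain.
Context {R : realType} {d : measure_display} {Omega : measurableType d}.
Variables (P : probability Omega R) (G : R -> R).
Hypotheses (cG : strictly_convex01 G) (dG : differentiable01 G) (bG : bounded01 G).
Implicit Types (E H : set Omega) (h Y : Omega -> R).

Lemma Rintegral_DG_le H h c : measurable H -> P H != 0 -> measurable_fun setT h ->
  (forall w, 0 <= h w <= 1) ->
  \int[P]_(w in H) DG G (h w) c <= (DG G (condE_on P H h) c + Mrange G) * fine (P H).
Proof.
move=> mH PH0 mh h01; set mu := condE_on P H h.
have mu01 : 0 <= mu <= 1 := condE_on01 P mH mh h01.
have [C DGC] := DG_bounded01 bG c.
have -> : (DG G mu c + Mrange G) * fine (P H) = \int[P]_(w in H)
    ((G mu + Mrange G - G c + c * derive1 G c) + - derive1 G c * h w).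
  by rewrite Rintegral_affine // -/mu /DG; ring.
apply: le_Rintegral => //.
- apply: (bounded_integrable P mH (measurable_DG dG c mh h01)).
  by move=> w; exact: DGC.
- exact: affine_integrable.
- by move=> w _; have := subr_le_Mrange bG (h01 w) mu01; rewrite /DG; lra.
Qed.

Section Gain.
Variables (eps : R) (E H : set Omega) (Y h : Omega -> R) (up : bool).
Hypotheses (mE : measurable E) (PE0 : P E != 0).
Hypotheses (mH : measurable H) (HE : H `<=` E).
Hypotheses (mY : measurable_fun setT Y) (Y01 : forall w, 0 <= Y w <= 1).
Hypotheses (mh : measurable_fun setT h) (h01 : forall w, 0 <= h w <= 1).
Hypothesis IYh : (\int[P]_(w in H) (Y w)%:E = \int[P]_(w in H) (h w)%:E)%E.
Hypothesis hH : forall w, H w -> eps / 2 <= DG G (h w) (condE_on P E Y) /\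
  (if up then condE_on P E Y < h w else h w < condE_on P E Y).

Lemma condE_on_eq_posterior : condE_on P H Y = condE_on P H h.
Proof. by rewrite !condE_onE /Rintegral IYh. Qed.

Lemma condE_on_DG_ge : P H != 0 ->
  eps / 2 <= DG G (condE_on P H Y) (condE_on P E Y).
Proof.
move=> PH0; set x := condE_on P E Y; set mu := condE_on P H Y.
have [w Hw hw_mu] : exists2 w, H w & if up then h w <= mu else mu <= h w.
  rewrite /mu condE_on_eq_posterior; case: (up).
    exact: exists_le_condE_on.
  exact: exists_ge_condE_on.
have [DGw xhw] := hH Hw.
have mu_neq_x : mu != x.
  case: (up) hw_mu xhw => /= hmu xh.
    by rewrite gt_eqF // (lt_le_trans xh).
  by rewrite lt_eqF // (le_lt_trans hmu).
(* A mean 0 or 1 of Y on E is inherited by every non-null subevent. *)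
have x01 : 0 < x < 1.
  have /andP[x0 x1] : 0 <= x <= 1 := condE_on01 P mE mY Y01.
  rewrite !lt_neqAle x0 x1 !andbT eq_sym.
  apply/andP; split; apply: contra mu_neq_x => /eqP ex; rewrite ex /mu.
    by rewrite (condE_on_subset_eq0 mE mH HE mY Y01 ex).
  by rewrite (condE_on_subset_eq1 mE mH HE PH0 mY Y01 ex).
apply: le_trans DGw (DG_le_between cG dG x01 (condE_on01 P mH mY Y01) _).
by case: (up) hw_mu xhw => /= hmu xh; rewrite ?(ltW xh) ?hmu ?orbT.
Qed.

Lemma condE_on_DG_gain : 0 < eps ->
  condE_on P E (fun w => DG G (h w) (condE_on P E Y) * \1_H w) * eps
    / (8 * Mrange G + 2 * eps)
  <= condE_on P E (fun w => DG G (condE_on P H Y) (condE_on P E Y) * \1_H w).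
Proof.
move=> eps0; set x := condE_on P E Y; set mu := condE_on P H Y; set M := Mrange G.
rewrite !condE_onE !Rintegral_mul_indic // Rintegral_cst //.
have pE := fine_prob_gt0 mE PE0.
have M0 : 0 <= M := Mrange_ge0 bG.
have D0 : 0 < 8 * M + 2 * eps by lra.
rewrite ler_pdivrMr // mulrAC [leRHS]mulrAC ler_pM2r ?invr_gt0 //.
have [PH0|PH0] := eqVneq (P H) 0.
  have -> : fine (P H) = 0 by rewrite PH0.
  rewrite /Rintegral null_set_integral //= ?(mul0r, mulr0) //.
  apply/measurable_EFinP; exact: measurable_funS (measurable_DG dG x mh h01).
have Dmu : eps / 2 <= DG G mu x := condE_on_DG_ge PH0.
have := Rintegral_DG_le x mH PH0 mh h01.
rewrite -condE_on_eq_posterior -/mu -/M => IDG.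
have gain : (DG G mu x + M) * eps <= DG G mu x * (8 * M + 2 * eps) by nra.
apply: le_trans (ler_wpM2r (ltW eps0) IDG) _.
by rewrite mulrAC [leRHS]mulrAC ler_wpM2r // fine_ge0 ?measure_ge0.
Qed.

End Gain.

End DivergenceGain.

Lemma measurableT_preimage (d d' : measure_display) (T : measurableType d)
  (U : measurableType d') (f : T -> U) (B : set U) :
  measurable_fun setT f -> measurable B -> measurable (f @^-1` B).
Proof. by move=> mf mB; rewrite -[f @^-1` B]setTI; exact: mf. Qed.

Lemma measurable_msg_set {R : realType} (G : R -> R) (d : measure_display)
  (T : measurableType d) eps up (A : set T) c (f : T -> R) :
  differentiable01 G -> measurable A -> measurable_fun setT f ->
  (forall s, 0 <= f s <= 1) -> measurable (msg_set G eps up A c f).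
Proof.
move=> dG mA mf f01.
have -> : msg_set G eps up A c f = A `&` (fun s => DG G (f s) c) @^-1` `[eps / 2, +oo[
    `&` f @^-1` [set` if up then `]c, +oo[ else `]-oo, c[].
  apply/seteqP; split => s /=; rewrite !in_itv /= andbT.
    by case=> [As [e1 e2]]; split; [split | case: up e2 => /= ->].
  by case=> [[As e1] e2]; split => //; split => //; case: up e2; rewrite /= ?andbT.
apply: measurableI; first apply: measurableI => //.
  by apply: measurableT_preimage; [exact: measurable_DG | exact: measurable_itv].
by apply: measurableT_preimage => //; exact: measurable_itv.
Qed.

Theorem lemmaC2 (R : realType) (d d1 d2 : measure_display)
  (Omega : measurableType d) (P : probability Omega R)
  (SS : measurableType d1) (TT : measurableType d2)
  (sig : Omega -> SS) (tau : Omega -> TT) (Y : Omega -> R)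
  (G : R -> R) (eps : R) (St : set SS) (Tt : set TT) :
  measurable_fun setT sig -> measurable_fun setT tau ->
  measurable_fun setT Y -> (forall w, 0 <= Y w <= 1) ->
  strictly_convex01 G -> differentiable01 G -> bounded01 G ->
  0 < eps -> measurable St -> measurable Tt ->
  (0 < P (sig @^-1` St `&` tau @^-1` Tt))%E ->
  let E := sig @^-1` St `&` tau @^-1` Tt in
  let mu0 := condE_on P E Y in
  (* Alice speaks at turn t+1 *)
  (forall (f : SS -> R), cond_version P sig tau Tt Y f ->
   forall up : bool,
   let Snext := msg_set G eps up St mu0 f in
   let hi := sig @^-1` Snext `&` tau @^-1` Tt in
   let mu1 := condE_on P hi Y in
   let alpha := condE_on P E (fun w => DG G (f (sig w)) mu0 * \1_hi w) in
   condE_on P E (fun w => DG G mu1 mu0 * \1_hi w)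
     >= alpha * eps / (8 * Mrange G + 2 * eps)) /\
  (* Bob speaks at turn t+1 *)
  (forall (g : TT -> R), cond_version P tau sig St Y g ->
   forall up : bool,
   let Tnext := msg_set G eps up Tt mu0 g in
   let hi := sig @^-1` St `&` tau @^-1` Tnext in
   let mu1 := condE_on P hi Y in
   let alpha := condE_on P E (fun w => DG G (g (tau w)) mu0 * \1_hi w) in
   condE_on P E (fun w => DG G mu1 mu0 * \1_hi w)
     >= alpha * eps / (8 * Mrange G + 2 * eps)).
Proof.
move=> msig mtau mY Y01 cG dG bG eps0 mSt mTt PE0 E mu0.
have mE : measurable E by apply: measurableI; exact: measurableT_preimage.
have {}PE0 : P E != 0 by rewrite gt_eqF.
split=> [f [mf [f01 If]]|g [mg [g01 Ig]]] up /=.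
- have mS := measurable_msg_set eps up mu0 dG mSt mf f01.
  apply: (condE_on_DG_gain cG dG bG (h := fun w => f (sig w)) (up := up)) => //.
  + by apply: measurableI; exact: measurableT_preimage.
  + by move=> w [[Sw _] Tw].
  + exact: measurableT_comp.
  + exact: If.
  + by move=> w [[_ []]].
- have mT := measurable_msg_set eps up mu0 dG mTt mg g01.
  apply: (condE_on_DG_gain cG dG bG (h := fun w => g (tau w)) (up := up)) => //.
  + by apply: measurableI; exact: measurableT_preimage.
  + by move=> w [Sw [Tw _]].
  + exact: measurableT_comp.
  + by rewrite setIC; exact: Ig.
  + by move=> w [_ [_ []]].
Qed.
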